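(* Let $X\in\sigma\mathcal F$ and $F\in\mathsf{age}(X)$ with $\mathsf{rk}_X(F)=\alpha$ for some ordinal $\alpha<\infty$. If $\beta<\alpha$, then there is $E\in\mathsf{age}(X)$ with $\mathsf{rk}_X(E)=\beta$.
   Context: Let $\mathcal L$ be a countable relational language without constants and $\mathcal F$ a hereditary, isomorphism-closed class of finite $\mathcal L$-structures. $\sigma\mathcal F$ is the class of countable structures isomorphic to unions of chains in $\mathcal F$; $\mathsf{age}(X)$ is the set of finite (induced) substructures of $X$. For $A\le B$, $B$ is a prime extension of $A$ if $|B\setminus A|=1$; a realization of $B$ in $X$ (where $A\le X$) is $C\le X$ with $A\le C$ and an isomorphism $B\to C$ fixing $A$ pointwise. For $F\in\mathsf{age}(X)$ define by recursion: $\mathsf{rk}_X(F)\ge0$ always; $\mathsf{rk}_X(F)\ge\alpha+1$ iff every prime extension $B\in\mathcal F$ of $F$ has a realization $C$ in $X$ with $\mathsf{rk}_X(C)\ge\alpha$; for limit $\alpha$, $\mathsf{rk}_X(F)\ge\alpha$ iff $\mathsf{rk}_X(F)\ge\beta$ for all $\beta<\alpha$. $\mathsf{rk}_X(F)=\sup\{\alpha:\mathsf{rk}_X(F)\ge\alpha\}$, with value $\infty$ (larger than every ordinal) if $\mathsf{rk}_X(F)\ge\alpha$ for every ordinal $\alpha$. *)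

From HB Require Import structures.
From mathcomp Require Import all_boot.
From mathcomp Require Import finmap.
Set Implicit Arguments. Unset Strict Implicit. Unset Printing Implicit Defensive.
Local Open Scope fset_scope.

Record lang := Lang { sym : countType; arity : sym -> nat }.

Definition lstr (L : lang) (T : Type) := forall s : sym L, ('I_(arity s) -> T) -> Prop.

Section Structures.
Variable L : lang.

Definition embedding (TA TB : Type) (A : lstr L TA) (B : lstr L TB) (f : TA -> TB) :=
  injective f /\ forall (s : sym L) (t : 'I_(arity s) -> TA), A s t <-> B s (f \o t).

Definition isomorphism (TA TB : Type) (A : lstr L TA) (B : lstr L TB) (f : TA -> TB) :=
  bijective f /\ embedding A B f.

Definition fclass := forall T : finType, lstr L T -> Prop.

Definition hereditary (K : fclass) := forall (TA TB : finType) (A : lstr L TA) (B : lstr L TB)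
  (f : TA -> TB), embedding A B f -> K TB B -> K TA A.

Definition iso_closed (K : fclass) := forall (TA TB : finType) (A : lstr L TA) (B : lstr L TB)
  (f : TA -> TB), isomorphism A B f -> K TA A -> K TB B.

Definition induced {T : choiceType} (X : lstr L T) (S : {fset T}) : lstr L S :=
  fun s t => X s (fun i => val (t i)).

(* X is (isomorphic to) the union of a chain of structures from K: there is a
   family of finite subsets of the carrier, linearly ordered by inclusion,
   covering the carrier, each inducing a structure in K. *)
Definition in_sigma (K : fclass) (T : countType) (X : lstr L T) :=
  exists ch : {fset T} -> Prop,
    (forall S1 S2, ch S1 -> ch S2 -> S1 `<=` S2 \/ S2 `<=` S1) /\
    (forall x : T, exists2 S, ch S & x \in S) /\
    (forall S : {fset T}, ch S -> K (fset_sub_type S) (@induced T X S)).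

End Structures.
Arguments induced {L T} X S.

Inductive ord : Type :=
| OZ : ord
| OS : ord -> ord
| OL : (nat -> ord) -> ord.   (* OL f denotes sup_n (f n) *)

Inductive ole : ord -> ord -> Prop :=
| oleZ b : ole OZ b
| oleS a b : olt a b -> ole (OS a) b
| oleL f b : (forall n, ole (f n) b) -> ole (OL f) b
with olt : ord -> ord -> Prop :=
| oltS a b : ole a b -> olt a (OS b)
| oltL a f n : olt a (f n) -> olt a (OL f).

Section Rank.
Variables (L : lang) (K : fclass L) (T : countType) (X : lstr L T).

(* Every prime extension B in K of F has a realization C in X satisfying P. *)
Definition ext_realized (F : {fset T}) (P : {fset T} -> Prop) :=
  forall (TB : finType) (B : lstr L TB) (e : F -> TB),
    @K TB B -> embedding (induced X F) B e ->
    #|[pred y : TB | y \notin codom e]| = 1 ->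
    exists C : {fset T}, F `<=` C /\ P C /\
      exists g : TB -> C, isomorphism B (induced X C) g /\
        forall x : F, val (g (e x)) = val x.

Fixpoint rk_geq (a : ord) (F : {fset T}) : Prop :=
  match a with
  | OZ => True
  | OS b => ext_realized F (rk_geq b)
  | OL f => forall n, rk_geq (f n) F
  end.

(* rk_X(F) = a (an ordinal, i.e. < infinity): a is the supremum of {g | rk_X(F) >= g} *)
Definition rk_is (F : {fset T}) (a : ord) :=
  (forall g, rk_geq g F -> ole g a) /\
  (forall d, (forall g, rk_geq g F -> ole g d) -> ole a d).

End Rank.

From mathcomp Require Import all_boot finmap.
From Stdlib Require Import Classical.

Set Implicit Arguments.
Unset Strict Implicit.

(* If rk(F) = a and b < a, then F has rank >= b+1 but not >= a+1.  Follow the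
   failure of "rank >= a+1" downwards: at a successor c+1 some prime extension
   has rank >= b but not >= c, at a limit some approximant already fails.  As
   long as the current set still has rank >= b+1 we continue from it with the
   smaller ordinal; the descent stops at a set of rank >= b but not >= b+1,
   i.e. of rank exactly b. *)

Scheme ole_olt_ind := Induction for ole Sort Prop
with olt_ole_ind := Induction for olt Sort Prop.

Lemma oleS_inv a b : ole (OS a) b -> olt a b.
Proof. by move=> H; inversion H. Qed.

Lemma oleL_inv f b : ole (OL f) b -> forall n, ole (f n) b.
Proof. by move=> H; inversion H. Qed.

Lemma oltS_inv a b : olt a (OS b) -> ole a b.
Proof. by move=> H; inversion H. Qed.

Lemma oltL_inv a f : olt a (OL f) -> exists n, olt a (f n).
Proof. by move=> H; inversion H; exists n. Qed.

Lemma olt_OZ a : ~ olt a OZ.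
Proof. by move=> H; inversion H. Qed.

Lemma ole_olt_asym a b : ole a b -> ~ olt b a.
Proof.
move: a b; apply (@ole_olt_ind (fun a b _ => ~ olt b a) (fun a b _ => ~ ole b a)).
- exact: olt_OZ.
- by move=> a b _ IH /oltS_inv.
- by move=> f b _ IH /oltL_inv [n]; apply: IH.
- by move=> a b _ IH /oleS_inv.
- by move=> a f n _ IH /oleL_inv /(_ n).
Qed.

Lemma ole_OL a f n : ole a (f n) -> ole a (OL f).
Proof.
elim: a => [|a _|g IHg] le_a_fn; first by constructor.
- by constructor; apply: (oltL (n := n)); apply: oleS_inv.
- by constructor=> m; apply: IHg; apply: oleL_inv le_a_fn m.
Qed.

Lemma ole_refl a : ole a a.
Proof.
elim: a => [|a IHa|f IHf]; first by constructor.
- by do 2 constructor.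
- by constructor=> n; apply: (ole_OL (n := n)).
Qed.

Lemma olt_irrefl a : ~ olt a a.
Proof. exact: ole_olt_asym (ole_refl a). Qed.

Lemma ole_total a b : ole a b \/ olt b a.
Proof.
elim: a b => [|a IHa|f IHf] b; first by left; constructor.
- elim: b => [|b _|g IHg]; first by right; do 2 constructor.
  + by case: (IHa b) => H; [left | right]; do 2 constructor.
  + case: (classic (exists m, olt a (g m))) => [[m lt_a_gm]|no_gm].
      by left; constructor; apply: (oltL (n := m)).
    right; constructor; constructor=> m.
    case: (IHg m) => [/oleS_inv lt_a_gm|/oltS_inv //].
    by case: no_gm; exists m.
- case: (classic (forall n, ole (f n) b)) => [le_fb|]; first by left; constructor.
  move=> /not_all_ex_not [n not_le_fn_b]; right; apply: (oltL (n := n)).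
  by case: (IHf n b).
Qed.

Section Rank.
Variables (L : lang) (K : fclass L) (T : countType) (X : lstr L T).

Lemma ext_realized_mono F (P Q : {fset T} -> Prop) :
  (forall C, P C -> Q C) -> ext_realized K X F P -> ext_realized K X F Q.
Proof.
move=> PQ realP TB B e KB emb_e prime_e.
have [C [sub_FC [PC iso_C]]] := realP TB B e KB emb_e prime_e.
by exists C; split; [|split; [apply: PQ|]].
Qed.

Lemma ext_realized_counterexample F (P Q : {fset T} -> Prop) :
  ext_realized K X F Q -> ~ ext_realized K X F P -> exists C, Q C /\ ~ P C.
Proof.
move=> realQ not_realP; apply: NNPP => no_C; apply/not_realP/(ext_realized_mono _ realQ).
by move=> C QC; apply: NNPP => not_PC; apply: no_C; exists C.
Qed.

Lemma rk_geq_ole g g' : ole g g' -> forall F, rk_geq K X g' F -> rk_geq K X g F.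
Proof.
move: g g'.
apply (@ole_olt_ind (fun g g' _ => forall F, rk_geq K X g' F -> rk_geq K X g F)
                    (fun g g' _ => forall F, rk_geq K X g' F -> rk_geq K X (OS g) F)).
- by [].
- by move=> a b _ IH F /IH.
- by move=> f b _ IH F geq_b n; apply: IH.
- by move=> a b _ IH F; apply: ext_realized_mono.
- by move=> a f n _ IH F /(_ n) /IH.
Qed.

Lemma rk_geq_bounded b F :
  ~ rk_geq K X (OS b) F -> forall g, rk_geq K X g F -> ole g b.
Proof.
move=> not_geq_Sb g geq_g; case: (ole_total g b) => // lt_bg.
by case: not_geq_Sb; apply: (rk_geq_ole _ geq_g); constructor.
Qed.

Lemma rk_is_exact b E :
  rk_geq K X b E -> ~ rk_geq K X (OS b) E -> rk_is K X E b.
Proof.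
move=> geq_b not_geq_Sb; split=> [|d bounded_d]; last exact: bounded_d.
exact: rk_geq_bounded.
Qed.

Lemma rk_is_not_geq_succ a F : rk_is K X F a -> ~ rk_geq K X (OS a) F.
Proof. by move=> [bounded _] /bounded /oleS_inv; apply: olt_irrefl. Qed.

Lemma rk_is_geq_succ_lt a b F :
  rk_is K X F a -> olt b a -> rk_geq K X (OS b) F.
Proof.
move=> [_ least] lt_ba; apply: NNPP => not_geq_Sb.
exact: ole_olt_asym (least b (rk_geq_bounded not_geq_Sb)) lt_ba.
Qed.

Lemma rk_is_descent a b F :
  ~ rk_geq K X a F -> rk_geq K X (OS b) F -> exists E, rk_is K X E b.
Proof.
elim: a F => [|a IHa|f IHf] F not_geq_a geq_Sb; first by case: not_geq_a.
- have [C [geq_bC not_geq_aC]] := ext_realized_counterexample geq_Sb not_geq_a.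
  case: (classic (rk_geq K X (OS b) C)) => [geq_SbC|not_geq_SbC].
    exact: IHa not_geq_aC geq_SbC.
  by exists C; apply: rk_is_exact.
- have [n not_geq_fn] := not_all_ex_not _ _ not_geq_a.
  exact: IHf not_geq_fn geq_Sb.
Qed.

End Rank.

Theorem proposition2p12 (L : lang) (K : fclass L)
  (HKher : hereditary K) (HKiso : iso_closed K)
  (T : countType) (X : lstr L T) (HX : in_sigma K X)
  (F : {fset T}) (a : ord) (HFa : rk_is K X F a)
  (b : ord) (Hba : olt b a) :
  exists E : {fset T}, rk_is K X E b.
Proof.
apply: (rk_is_descent (a := OS a) (F := F)).
- exact: rk_is_not_geq_succ HFa.
- exact: rk_is_geq_succ_lt HFa Hba.
Qed.
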